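(* Let $\|\cdot\|$ be a norm on $\mathbb{R}^n$ which is $C^1$ (away from the origin) and strictly convex, and let $\mathsf{d}(x,y)=\|x-y\|$. Then $(\mathbb{R}^n,\mathsf{d})$ is locally-uniformly non-branching.
   Context: $\mathrm{Geo}(\mathsf{X},\mathsf{d})$ is the set of constant-speed length-minimising curves $\gamma:[0,1]\to\mathsf{X}$. A metric space $(\mathsf{X},\mathsf{d})$ is locally-uniformly non-branching if it is Polish and for every $x,y,z\in\mathsf{X}$ with $y\ne z$ and $\mathsf{d}(x,y)=\mathsf{d}(x,z)$ there exist $r>0$ and $\rho>0$ such that for all $x'\in B_r(x)$, $y'\in B_r(y)$, $z'\in B_r(z)$ there is $\gamma\in\mathrm{Geo}(\mathsf{X},\mathsf{d})$ with $\gamma(0)=x'$, $\gamma(1)=y'$ and $\liminf_{t\downarrow0}\frac{\mathsf{d}(\gamma(t),z')-\mathsf{d}(x',z')}{t}\ge-(1-\rho)\,\mathsf{d}(x',y')$. *)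

From HB Require Import structures.
From mathcomp Require Import all_boot all_order all_algebra.
From mathcomp Require Import all_classical all_reals all_analysis.
Set Implicit Arguments. Unset Strict Implicit. Unset Printing Implicit Defensive.
Import Order.TTheory GRing.Theory Num.Theory.
Import numFieldNormedType.Exports.
Local Open Scope classical_set_scope.
Local Open Scope ring_scope.

Section Defs.
Variable R : realType.

Definition metric_complete (X : Type) (d : X -> X -> R) : Prop :=
  forall u : nat -> X,
    (forall e : R, 0 < e -> exists N : nat, forall m k : nat,
        (N <= m)%N -> (N <= k)%N -> d (u m) (u k) < e) ->
    exists l : X, forall e : R, 0 < e -> exists N : nat, forall m : nat,
        (N <= m)%N -> d (u m) l < e.

Definition metric_separable (X : Type) (d : X -> X -> R) : Prop :=
  exists S : set X, countable S /\
    forall (x : X) (e : R), 0 < e -> exists2 s, S s & d x s < e.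

Definition polish (X : Type) (d : X -> X -> R) : Prop :=
  metric_complete d /\ metric_separable d.

(* Geo(X,d): constant-speed length-minimising curves [0,1] -> X
   (a curve is represented by a function R -> X; only its values on
   [0,1] matter). *)
Definition is_geodesic (X : Type) (d : X -> X -> R) (g : R -> X) : Prop :=
  forall s t : R, 0 <= s <= 1 -> 0 <= t <= 1 ->
    d (g s) (g t) = `|s - t| * d (g 0) (g 1).

Definition liminf_right0_ge (f : R -> R) (c : R) : Prop :=
  forall e : R, 0 < e -> \forall t \near 0^'+, c - e <= f t.

Definition locally_uniformly_non_branching (X : Type) (d : X -> X -> R) : Prop :=
  polish d /\
  forall x y z : X, y <> z -> d x y = d x z ->
    exists r : R, exists rho : R, 0 < r /\ 0 < rho /\
      forall x' y' z' : X, d x x' < r -> d y y' < r -> d z z' < r ->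
        exists g : R -> X, is_geodesic d g /\ g 0 = x' /\ g 1 = y' /\
          liminf_right0_ge (fun t => (d (g t) z' - d x' z') / t)
                           (- ((1 - rho) * d x' y')).

Definition is_norm (n : nat) (N : 'rV[R]_n -> R) : Prop :=
  (forall x, N x = 0 -> x = 0) /\
  (forall (a : R) x, N (a *: x) = `|a| * N x) /\
  (forall x y, N (x + y) <= N x + N y).

Definition strictly_convex_norm (n : nat) (N : 'rV[R]_n -> R) : Prop :=
  forall (x y : 'rV[R]_n) (t : R), N x = 1 -> N y = 1 -> x <> y ->
    0 < t < 1 -> N (t *: x + (1 - t) *: y) < 1.

(* C^1 away from the origin: differentiable at every x <> 0, with
   derivative continuous on R^n \ {0} (tested on every direction v,
   which in finite dimension is continuity of x |-> dN(x)). *)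
Definition C1_away_from_origin (n : nat) (N : 'rV[R]_n -> R) : Prop :=
  (forall x : 'rV[R]_n, x != 0 -> differentiable N x) /\
  (forall x v : 'rV[R]_n, x != 0 -> {for x, continuous (fun y => 'd N y v)}).

End Defs.

From HB Require Import structures.
From mathcomp Require Import all_boot all_order all_algebra.
From mathcomp Require Import all_classical all_reals all_analysis.
From mathcomp Require Import ring lra.
Import Order.TTheory GRing.Theory Num.Theory.
Import numFieldNormedType.Exports.
Local Open Scope classical_set_scope.
Local Open Scope ring_scope.

(* Geodesics of a normed space include the straight segments, and along the
   segment [t |-> x' + t (y' - x')] the liminf in the definition is the
   directional derivative [dN(x' - z') (y' - x')].  At the base point
   [x - z] this derivative is [> -N(y - x)]: otherwise
   [N((x - y) + (x - z)) >= dN(x - z)((x - y) + (x - z)) >= 2 N(x - z)],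
   contradicting strict convexity, since [x - y] and [x - z] are distinct
   points of the same sphere.  Continuity of [dN] away from the origin makes
   the inequality, with some margin [rho], uniform near [(x, y, z)]. *)

Lemma mx_norm_coord_le {R : realType} {m n} (A : 'M[R]_(m, n)) i j :
  `|A i j| <= `|A|.
Proof.
have /mapP[k _ ->] : `|A i j| \in [seq `|A x.1 x.2| | x : 'I_m * 'I_n].
  by apply/mapP; exists (i, j) => //=; rewrite mem_enum.
by rewrite [leRHS]/Num.norm /= mx_normrE; apply/bigmax_geP; right; exists k.
Qed.

Lemma mx_norm_lt {R : realType} {m n} (A : 'M[R]_(m, n)) d :
  0 < d -> (forall i j, `|A i j| < d) -> `|A| < d.
Proof.
by move=> d0 H; rewrite /Num.norm /= mx_normrE; apply/bigmax_ltP; split.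
Qed.

Lemma cvg_liminf_right0_ge {R : realType} (f : R -> R) l c :
  f @ 0^'+ --> l -> c <= l -> liminf_right0_ge f c.
Proof.
move=> fl cl e e0; apply: (cvgr_ge _ fl).
by rewrite ltrBlDr ltr_pwDr.
Qed.

Section GeneralNorm.
Context {R : realType} {n : nat} {N : 'rV[R]_n -> R}.
Hypothesis hN : is_norm N.

Let dist (x y : 'rV[R]_n) := N (x - y).

Lemma gnormZ a x : N (a *: x) = `|a| * N x.
Proof. exact: hN.2.1. Qed.

Lemma ger0_gnormZ a x : 0 <= a -> N (a *: x) = a * N x.
Proof. by move=> a0; rewrite gnormZ ger0_norm. Qed.

Lemma gnormD x y : N (x + y) <= N x + N y.
Proof. exact: hN.2.2. Qed.

Lemma gnorm0 : N 0 = 0.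
Proof. by rewrite -(scale0r 0) gnormZ normr0 mul0r. Qed.

Lemma gnormN x : N (- x) = N x.
Proof. by rewrite -scaleN1r gnormZ normrN normr1 mul1r. Qed.

Lemma gnorm_ge0 x : 0 <= N x.
Proof.
by have := gnormD x (- x); rewrite subrr gnorm0 gnormN -mulr2n pmulrn_lge0.
Qed.

Lemma gnorm_gt0 x : x != 0 -> 0 < N x.
Proof.
by move=> x0; rewrite lt_neqAle gnorm_ge0 andbT eq_sym; apply: contra x0 => /eqP/hN.1->.
Qed.

Lemma gdistC x y : N (x - y) = N (y - x).
Proof. by rewrite -gnormN opprB. Qed.

Lemma lerB_gdist x y : N x - N y <= N (x - y).
Proof. by rewrite lerBlDr; have := gnormD (x - y) y; rewrite subrK. Qed.

Lemma gnorm_le_mx_norm : exists2 C, 0 < C & forall v, N v <= C * `|v|.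
Proof.
exists (1 + \sum_(j < n) N 'e_j).
  by rewrite ltr_pwDl ?sumr_ge0 // => j _; exact: gnorm_ge0.
move=> v; rewrite [v in N v]row_sum_delta.
apply: (@le_trans _ _ (\sum_(j < n) `|v| * N 'e_j)).
  elim/big_ind2: _ => [|a b c d hab hcd|j _].
  - by rewrite gnorm0.
  - exact: le_trans (gnormD _ _) (lerD hab hcd).
  - by rewrite gnormZ ler_wpM2r ?gnorm_ge0 ?mx_norm_coord_le.
by rewrite -mulr_sumr mulrC ler_wpM2r // ler_wpDl.
Qed.

Lemma gnorm_continuous : continuous N.
Proof.
move=> x; have [C C0 HC] := gnorm_le_mx_norm.
have nbhs_x_proper : ProperFilter (nbhs x) by exact: nbhs_pfilter.
apply/cvgrPdist_lt => e e0; near=> y.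
have xy : `|x - y| < e / C.
  by near: y; apply: (@cvgr_dist_lt _ _ _ _ _ id x (cvg_id (F := nbhs x))); rewrite divr_gt0.
apply: (@le_lt_trans _ _ (N (x - y))).
  rewrite ler_norml lerB_gdist andbT lerNl opprB gdistC; exact: lerB_gdist.
by apply: le_lt_trans (HC _) _; rewrite -ltr_pdivlMl // mulrC.
Unshelve. all: by end_near.
Qed.

(* The minimum of [N] on the (compact) unit sphere of the max-norm. *)
Lemma mx_norm_le_gnorm : exists2 c, 0 < c & forall v, c * `|v| <= N v.
Proof.
pose S := [set v : 'rV[R]_n | `|v| = 1].
have normalize v : v != 0 -> S (`|v|^-1 *: v).
  by move=> v0; rewrite /S /= normrZ normrV ?unitfE ?normr_eq0 // normr_id mulVf ?normr_eq0.
have [[v0 Sv0]|S0] := pselect (S !=set0); last first.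
  exists 1 => // v; rewrite mul1r.
  have [->|v0] := eqVneq v 0; first by rewrite normr0 gnorm_ge0.
  by case: S0; exists (`|v|^-1 *: v); exact: normalize.
have cS : compact S.
  apply: bounded_closed_compact.
    by exists 1; split => // M M1 x Sx /=; rewrite Sx ltW.
  exact: (continuous_closedP _).1 (@norm_continuous _ _) _ (@closed_eq R 1).
have [u Su umin] := EVT_min_rV (ex_intro _ v0 Sv0) cS
  (continuous_subspaceT gnorm_continuous).
rewrite inE in Su.
have u0 : u != 0 by apply/eqP => u0; move: Su; rewrite u0 /S /= normr0 => /esym/eqP; rewrite oner_eq0.
exists (N u) => [|v]; first exact: gnorm_gt0.
have [->|vn0] := eqVneq v 0; first by rewrite normr0 mulr0 gnorm_ge0.
have nv0 : 0 < `|v| by rewrite normr_gt0.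
have -> : N v = `|v| * N (`|v|^-1 *: v).
  by rewrite -ger0_gnormZ ?ltW // scalerA mulfV ?gt_eqF // scale1r.
by rewrite mulrC ler_pM2l //; apply: umin; rewrite inE; exact: normalize.
Qed.

Lemma gdist_complete : metric_complete dist.
Proof.
move=> u u_cauchy.
have [c c0 Hc] := mx_norm_le_gnorm; have [C C0 HC] := gnorm_le_mx_norm.
have cu : cauchy (u @ \oo).
  apply: cauchy_exP => e e0.
  have [K HK] := u_cauchy (c * e) (mulr_gt0 c0 e0).
  exists (u K), K => // m /= Km; rewrite -ball_normE /= -(ltr_pM2l c0).
  exact: le_lt_trans (Hc _) (HK _ _ _ _).
have [l ul] := (cvg_ex _).1 (cauchy_cvg _ cu).
exists l => e e0.
have [K _ HK] := cvgr_dist_lt _ _ ul _ (divr_gt0 e0 C0).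
exists K => m Km; apply: le_lt_trans (HC _) _.
by rewrite -ltr_pdivlMl // mulrC -normrN opprB HK.
Qed.

(* Rational row vectors are dense. *)
Lemma gdist_separable : metric_separable dist.
Proof.
have [C C0 HC] := gnorm_le_mx_norm.
exists (range (fun q : 'rV[rat]_n => map_mx (@ratr R) q)); split.
  exact: (sub_countable (card_image_le _ setT) (countableP _)).
move=> x e e0.
have /choice[f Hf] : forall j : 'I_n, exists q : rat,
    ratr q \in `](x 0 j - e / C), (x 0 j + e / C)[.
  move=> j; apply: rat_in_itvoo.
  by rewrite ltrBlDr -addrA ltrDl addr_gt0 ?divr_gt0.
exists (map_mx ratr (\row_j f j)); first by exists (\row_j f j).
apply: le_lt_trans (HC _) _; rewrite -ltr_pdivlMl // mulrC.
apply: mx_norm_lt; first by rewrite divr_gt0.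
move=> i j; rewrite !mxE (ord1 i).
move: (Hf j); rewrite in_itv /= ltr_norml => /andP[h1 h2].
by apply/andP; split; lra.
Qed.

Lemma gdist_polish : polish dist.
Proof. by split; [exact: gdist_complete | exact: gdist_separable]. Qed.

Lemma segment_is_geodesic x v : is_geodesic dist (fun t => x + t *: v).
Proof.
move=> s t _ _; rewrite /dist opprD addrACA subrr add0r -scalerBl gnormZ.
by rewrite scale1r scale0r addr0 opprD addrA subrr add0r gnormN.
Qed.

Section Differential.
Context {w : 'rV[R]_n}.
Hypothesis dw : differentiable N w.

Lemma cvg_gnorm_diff_quotient u :
  (fun h : R => (N (w + h *: u) - N w) / h) @ 0^'+ --> 'd N w u.
Proof.
have /cvg_ex[l hl] := diff_derivable (v := u) dw.
have -> : 'd N w u = l by rewrite -deriveE // /derive (cvg_lim _ hl).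
have -> : (fun h : R => (N (w + h *: u) - N w) / h) =
    (fun h => h^-1 *: ((N \o shift w) (h *: u) - N w)).
  by apply: funext => h /=; rewrite [h *: u + w]addrC mulrC.
move=> A /hl /nbhs_ballP[e e0 H]; exists e => // y /H + /gt_eqF/negbT; exact.
Qed.

Lemma diff_gnorm_le u : 'd N w u <= N u.
Proof.
apply: cvgr_to_le (cvg_gnorm_diff_quotient u) _; near=> h.
have h0 : 0 < h by near: h; exact: nbhs_right_gt.
rewrite ler_pdivrMr // mulrC -(ger0_gnormZ _ u (ltW h0)) lerBlDl.
exact: gnormD.
Unshelve. all: by end_near.
Qed.

Lemma diff_gnorm_ge u : - N u <= 'd N w u.
Proof. by rewrite lerNl -linearN -gnormN diff_gnorm_le. Qed.

Lemma diff_gnorm_self : 'd N w w = N w.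
Proof.
apply/eqP; rewrite eq_le diff_gnorm_le /=.
apply: cvgr_to_ge (cvg_gnorm_diff_quotient w) _; near=> h.
have h0 : 0 < h by near: h; exact: nbhs_right_gt.
have -> : w + h *: w = (1 + h) *: w by rewrite scalerDl scale1r.
rewrite ger0_gnormZ; last by rewrite ltW ?addr_gt0.
by rewrite [(1 + h) * _]mulrDl mul1r addrAC subrr add0r mulrAC mulfV ?gt_eqF ?mul1r.
Unshelve. all: by end_near.
Qed.

End Differential.

Section StrictConvexity.
Hypothesis hS : strictly_convex_norm N.

Lemma strictly_convex_gnormD_lt {a b} : a <> b -> N a = N b -> N (a + b) < 2 * N a.
Proof.
move=> ab Nab; have a0 : a != 0.
  by apply/eqP => a0; apply: ab; rewrite a0 gnorm0 in Nab *; rewrite (hN.1 _ (esym Nab)).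
have Na0 : 0 < N a by exact: gnorm_gt0.
set D := N a in Nab Na0 *.
have Na : N (D^-1 *: a) = 1 by rewrite gnormZ ger0_norm ?invr_ge0 ?ltW // mulVf ?gt_eqF.
have Nb : N (D^-1 *: b) = 1 by rewrite gnormZ -Nab ger0_norm ?invr_ge0 ?ltW // mulVf ?gt_eqF.
have ab' : D^-1 *: a <> D^-1 *: b by move/(can_inj (scalerK (invr_neq0 (lt0r_neq0 Na0)))).
have half : 0 < (2^-1 : R) < 1 by apply/andP; split; lra.
have := hS _ _ _ Na Nb ab' half.
have -> : (1 - 2^-1 : R) = 2^-1 by field.
rewrite !scalerA -scalerDr ger0_gnormZ; last by rewrite mulr_ge0 ?invr_ge0 ?ltW.
by rewrite -invfM ltr_pdivrMl ?mulr_gt0 // mulr1.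
Qed.

Lemma diff_gnorm_lt {a b} :
  a <> b -> N a = N b -> differentiable N b -> 'd N b a < N b.
Proof.
move=> ab Nab db; rewrite ltNge; apply/negP => Hle.
have := diff_gnorm_le db (a + b); rewrite linearD diff_gnorm_self //.
have := strictly_convex_gnormD_lt ab Nab; lra.
Qed.

End StrictConvexity.

Section ContinuousDifferential.
Hypothesis hC1 : C1_away_from_origin N.

Lemma diff_gnorm_uniform_margin w0 v0 :
  w0 != 0 -> - N v0 < 'd N w0 v0 ->
  exists r rho, 0 < r /\ 0 < rho /\ forall w v, N (w - w0) < r -> N (v - v0) < r ->
    differentiable N w /\ - ((1 - rho) * N v) <= 'd N w v.
Proof.
(* [dN] types the differential's values in [R] itself, so that [lra] treats
   them as real atoms. *)
move=> w00 del0; pose dN a b : R := 'd N a b.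
pose del : R := dN w0 v0 + N v0.
have {}del0 : 0 < del by rewrite /del addrC -ltrBlDl sub0r.
have [c c0 Hc] := mx_norm_le_gnorm.
have := cvgr_dist_lt _ _ (hC1.2 _ v0 w00) _ (divr_gt0 del0 (ltr0n _ 4)).
move=> /(_ (nbhs_filter _)) /(nbhs_ballP _ _).1 [eta /= eta0 Heta].
pose r := Num.min (Num.min (del / 8) (N w0)) (c * eta).
pose rho := del / (2 * (N v0 + del)).
have r0 : 0 < r by rewrite !lt_min gnorm_gt0 // !divr_gt0 ?mulr_gt0.
have rdel : r <= del / 8 by rewrite !ge_min lexx.
have rw0 : r <= N w0 by rewrite !ge_min lexx orbT.
have reta : r <= c * eta by rewrite ge_min lexx orbT.
have Nv0_ge0 := gnorm_ge0 v0.
have rho0 : 0 < rho by apply: divr_gt0; lra.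
exists r, rho; split=> //; split=> // w v hw hv.
have wn0 : w != 0.
  by apply/eqP => w0'; move: hw; rewrite w0' sub0r gnormN; lra.
have dw := hC1.1 _ wn0; split => //.
have hpw : `|dN w0 v0 - dN w v0| < del / 4.
  apply: Heta; rewrite -ball_normE /= -(ltr_pM2l c0).
  by apply: le_lt_trans (Hc _) _; rewrite gdistC; lra.
have dvv0 : dN w v = dN w v0 + dN w (v - v0) by rewrite /dN -linearD addrC subrK.
have dv_ge : - N (v - v0) <= dN w (v - v0) := diff_gnorm_ge dw _.
have Nv_ge : N v0 - N (v - v0) <= N v.
  by rewrite gdistC; apply: le_trans (lerB_gdist _ _) _; rewrite opprB addrC subrK.
have Nv_le : N v <= N v0 + N (v - v0).
  by rewrite -{1}(subrK v0 v) addrC gnormD.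
have rhoNv : rho * N v <= del / 2.
  have -> : del / 2 = rho * (N v0 + del).
    by rewrite /rho; field; rewrite lt0r_neq0 //; lra.
  by rewrite ler_wpM2l ?(ltW rho0) //; lra.
move: hpw; rewrite ltr_norml => /andP[_ hpw].
change (- ((1 - rho) * N v) <= dN w v); rewrite dvv0.
have delE : del = dN w0 v0 + N v0 by [].
(* [lra] gets lost if it can unfold these local definitions. *)
clearbody dN del r rho; lra.
Qed.

End ContinuousDifferential.

Lemma segment_liminf_ge x y z c :
  differentiable N (x - z) -> c <= 'd N (x - z) (y - x) ->
  liminf_right0_ge (fun t => (dist (x + t *: (y - x)) z - dist x z) / t) c.
Proof.
move=> dxz; apply: cvg_liminf_right0_ge.
have -> : (fun t => (dist (x + t *: (y - x)) z - dist x z) / t) =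
    (fun t => (N ((x - z) + t *: (y - x)) - N (x - z)) / t).
  by apply: funext => t; rewrite /dist addrAC.
exact: cvg_gnorm_diff_quotient.
Qed.

End GeneralNorm.

Theorem mainTheorem8 (R : realType) (n : nat) (N : 'rV[R]_n -> R) :
  is_norm N -> C1_away_from_origin N -> strictly_convex_norm N ->
  locally_uniformly_non_branching (fun x y : 'rV[R]_n => N (x - y)).
Proof.
move=> hN hC1 hS; split; first exact: gdist_polish.
move=> x y z yz Dxy.
have xz0 : x - z != 0.
  apply/eqP => /eqP; rewrite subr_eq0 => /eqP xz; apply: yz.
  by move: Dxy; rewrite xz subrr gnorm0 // => /hN.1/subr0_eq ->.
have margin : - N (y - x) < 'd N (x - z) (y - x).
  have yz' : x - y <> x - z by move/addrI/oppr_inj.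
  rewrite -[y - x]opprB linearN (gnormN hN) Dxy ltrN2.
  exact: (diff_gnorm_lt hN hS yz' Dxy (hC1.1 _ xz0)).
have [r [rho [r0 [rho0 near_margin]]]] :=
  diff_gnorm_uniform_margin hN hC1 (x - z) (y - x) xz0 margin.
exists (r / 2), rho; split; first by rewrite divr_gt0.
split=> // x' y' z' hx hy hz.
have [dw dN_bound] : differentiable N (x' - z') /\
    - ((1 - rho) * N (y' - x')) <= 'd N (x' - z') (y' - x').
  apply: near_margin.
  - have -> : x' - z' - (x - z) = (x' - x) + (z - z').
      by rewrite opprB addrACA [RHS]addrACA [- z' - x]addrC.
    by apply: le_lt_trans (gnormD hN _ _) _; rewrite (gdistC hN x'); lra.
  - have -> : y' - x' - (y - x) = (y' - y) + (x - x').
      by rewrite opprB addrACA [RHS]addrACA [- x' - y]addrC.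
    by apply: le_lt_trans (gnormD hN _ _) _; rewrite (gdistC hN y'); lra.
exists (fun t => x' + t *: (y' - x')); split; first exact: segment_is_geodesic.
split; first by rewrite scale0r addr0.
split; first by rewrite scale1r addrC subrK.
by apply: segment_liminf_ge; rewrite ?(gdistC hN x').
Qed.
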